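(* Let $\Omega\subset\mathbb R^d$ be compact with nonempty interior. Then the set of restrictions to $\Omega$ of the maps $$\mathbf x\mapsto \mathbf W^T\,\mathrm{ReLU}(\mathbf W\mathbf x-\mathbf b),\qquad p\in\mathbb N,\ \mathbf W\in\mathbb R^{p\times d},\ \mathbf b\in\mathbb R^p,$$ (with $\mathrm{ReLU}(t)=\max(t,0)$ applied componentwise) is not dense in $\mathcal E(\Omega)$ with respect to the norm $\|\mathbf f\|_{C(\Omega)}=\sup_{\mathbf x\in\Omega}\|\mathbf f(\mathbf x)\|$.
   Context: $C^{0,1}_{\uparrow}(\mathbb R)$ denotes the set of Lipschitz-continuous increasing functions $\mathbb R\to\mathbb R$. $\mathcal E(\mathbb R^d)$ is the set of maps $\mathbf x\mapsto\mathbf W^T\boldsymbol\sigma(\mathbf W\mathbf x)$ with $p\in\mathbb N$, $\mathbf W\in\mathbb R^{p\times d}$, and $\boldsymbol\sigma$ acting componentwise as $(\boldsymbol\sigma(\mathbf z))_i=\sigma_i(z_i)$ with each $\sigma_i\in C^{0,1}_{\uparrow}(\mathbb R)$; $\mathcal E(\Omega)$ is the set of restrictions to $\Omega$ of elements of $\mathcal E(\mathbb R^d)$. *)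

From HB Require Import structures.
From mathcomp Require Import all_boot all_order all_algebra.
From mathcomp Require Import all_classical all_reals all_analysis.
Set Implicit Arguments. Unset Strict Implicit. Unset Printing Implicit Defensive.
Import Order.TTheory GRing.Theory Num.Theory.
Import numFieldNormedType.Exports.
Local Open Scope ring_scope.
Local Open Scope classical_set_scope.

Definition enorm (R : realType) (d : nat) (v : 'cV[R]_d) : R :=
  Num.sqrt (\sum_(i < d) v i 0 ^+ 2).

Definition lip_incr (R : realType) (s : R -> R) : Prop :=
  (exists L : R, forall x y, `|s x - s y| <= L * `|x - y|) /\
  (forall x y, x <= y -> s x <= s y).

Definition cw_apply (R : realType) (p : nat) (sigma : 'I_p -> R -> R)
  (z : 'cV[R]_p) : 'cV[R]_p := \col_i sigma i (z i 0).

Definition E_map (R : realType) (d : nat) (f : 'cV[R]_d -> 'cV[R]_d) : Prop :=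
  exists (p : nat) (W : 'M[R]_(p, d)) (sigma : 'I_p -> R -> R),
    (forall i, lip_incr (sigma i)) /\
    f = fun x => W^T *m cw_apply sigma (W *m x).

Definition relu (R : realType) (t : R) : R := Num.max t 0.

Definition relu_map (R : realType) (d : nat) (g : 'cV[R]_d -> 'cV[R]_d) : Prop :=
  exists (p : nat) (W : 'M[R]_(p, d)) (b : 'cV[R]_p),
    g = fun x => W^T *m (\col_i relu ((W *m x - b) i 0)).

From mathcomp Require Import all_boot all_order all_algebra.
From mathcomp Require Import all_classical all_reals all_analysis.
From mathcomp Require Import ring lra.
Import Order.TTheory GRing.Theory Num.Theory.
Import numFieldNormedType.Exports.
Local Open Scope ring_scope.
Local Open Scope classical_set_scope.

(** Along the coordinate line [x0 + s e_k], the [k]-th component of a ReLU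
    ridge map [x |-> W^T ReLU(W x - b)] is [s |-> sum_i a_i ReLU(c_i + s a_i)]
    with [a_i = W_ik]. Each term is nondecreasing, and convex if [a_i >= 0],
    concave if [a_i <= 0]; either way the four-point functional [jump_test]
      [J G = (G(2t) - G(t)) - (G(3t) - G(2t)) - (G(t) - G(0))]
    is nonpositive on it, hence on the sum. The element [x |-> ramp(x_k) e_k]
    of [E], whose clamped ramp rises from 0 to [t] between [x0_k + t] and
    [x0_k + 2t], has [J = t]. As [J] moves by at most [6 eps] under a
    perturbation of sup-norm [eps], no ReLU ridge map is [t/8]-close to it on
    a segment of that line lying in [Omega]. *)

Section JumpTest.
Context {R : realType}.
Implicit Types (a c h s t u v x y z eps : R) (F G : R -> R).

Definition jump_test G t : R := 2 * G (2 * t) - 2 * G t - G (3 * t) + G 0.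

Lemma jump_test_relu_le0 c t : 0 <= t -> jump_test (fun s => relu (c + s)) t <= 0.
Proof.
move=> t_ge0; rewrite /jump_test /relu addr0.
by case: (leP (c + 2 * t) 0); case: (leP (c + t) 0);
  case: (leP (c + 3 * t) 0); case: (leP c 0) => *; lra.
Qed.

Lemma jump_test_relu_ge0 c t : t <= 0 -> 0 <= jump_test (fun s => relu (c + s)) t.
Proof.
move=> t_le0; rewrite -oppr_le0.
have -> : - jump_test (fun s => relu (c + s)) t =
          jump_test (fun s => relu (c + 3 * t + s)) (- t).
  rewrite /jump_test /= !addr0.
  have -> : c + 3 * t + 2 * - t = c + t by ring.
  have -> : c + 3 * t + - t = c + 2 * t by ring.
  have -> : c + 3 * t + 3 * - t = c by ring.
  ring.
by apply: (jump_test_relu_le0 (c + 3 * t)); rewrite oppr_ge0.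
Qed.

Lemma jump_test_neuron_le0 a c t :
  0 <= t -> jump_test (fun s => a * relu (c + s * a)) t <= 0.
Proof.
move=> t_ge0.
have -> : jump_test (fun s => a * relu (c + s * a)) t =
          a * jump_test (fun s => relu (c + s)) (t * a).
  by rewrite /jump_test /= mul0r !addr0 ![_ * (t * a)]mulrA; ring.
have [a_ge0 | a_lt0] := leP 0 a.
  by rewrite mulr_ge0_le0 // jump_test_relu_le0 // mulr_ge0.
apply: mulr_le0_ge0; first exact: ltW.
by apply: jump_test_relu_ge0; rewrite mulr_ge0_le0 // ltW.
Qed.

Lemma jump_test_sum (p : nat) (F : 'I_p -> R -> R) t :
  jump_test (fun s => \sum_i F i s) t = \sum_i jump_test (F i) t.
Proof. by rewrite /jump_test !mulr_sumr -!sumrB -big_split. Qed.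

Lemma jump_test_ridge_sum_le0 {p : nat} (a c : 'I_p -> R) t : 0 <= t ->
  jump_test (fun s => \sum_i a i * relu (c i + s * a i)) t <= 0.
Proof.
move=> t_ge0; rewrite jump_test_sum; apply: sumr_le0 => i _.
exact: jump_test_neuron_le0.
Qed.

Lemma jump_test_approx {F G t eps} : 0 <= t ->
  (forall s, 0 <= s -> s <= 3 * t -> `|F s - G s| <= eps) ->
  jump_test F t <= jump_test G t + 6 * eps.
Proof.
move=> t_ge0 FG.
have /ler_normlP[? ?] := FG (0) ltac:(lra) ltac:(lra).
have /ler_normlP[? ?] := FG (t) ltac:(lra) ltac:(lra).
have /ler_normlP[? ?] := FG (2 * t) ltac:(lra) ltac:(lra).
have /ler_normlP[? ?] := FG (3 * t) ltac:(lra) ltac:(lra).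
rewrite /jump_test; lra.
Qed.

Lemma normB_max_le x y z : `|Num.max x z - Num.max y z| <= `|x - y|.
Proof.
have /ler_normlP[? ?] := lexx `|x - y|.
by apply/ler_normlP; case: (leP x z); case: (leP y z) => *; split; lra.
Qed.

Lemma normB_min_le x y z : `|Num.min x z - Num.min y z| <= `|x - y|.
Proof.
have /ler_normlP[? ?] := lexx `|x - y|.
by apply/ler_normlP; case: (leP x z); case: (leP y z) => *; split; lra.
Qed.

Definition ramp a h u : R := Num.min (relu (u - a)) h.

Lemma ramp_lip_incr a h : lip_incr (ramp a h).
Proof.
split=> [|u v uv]; last by rewrite le_min2 // le_max2 // lerB.
exists 1 => u v; rewrite mul1r (le_trans (normB_min_le _ _ _)) //.
by rewrite (le_trans (normB_max_le _ _ _)) // opprB addrA subrK.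
Qed.

Lemma jump_test_ramp x t : 0 < t -> jump_test (fun s => ramp (x + t) t (x + s)) t = t.
Proof.
move=> t_gt0; rewrite /jump_test /ramp /relu !addr0 subrr.
have -> : x + 2 * t - (x + t) = t by ring.
have -> : x + 3 * t - (x + t) = 2 * t by ring.
have -> : x - (x + t) = - t by ring.
rewrite maxxx (max_r (_ : - t <= 0)) ?oppr_le0 ?ltW // (max_l (ltW t_gt0)).
rewrite (max_l (_ : 0 <= 2 * t)); last by lra.
rewrite (min_l (ltW t_gt0)) minxx (min_r (_ : t <= 2 * t)); last by lra.
ring.
Qed.

End JumpTest.

Lemma coord_le_enorm {R : realType} {d : nat} (v : 'cV[R]_d) k : `|v k 0| <= enorm v.
Proof.
rewrite /enorm -sqrtr_sqr ler_sqrt; last by apply: sumr_ge0 => i _; exact: sqr_ge0.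
by rewrite (bigD1 k) //= lerDl; apply: sumr_ge0 => i _; exact: sqr_ge0.
Qed.

Lemma nbhs_line {R : realType} {d : nat} {A : set 'cV[R]_d} {x : 'cV[R]_d} (v : 'cV[R]_d) :
  nbhs x A -> exists2 e : R, 0 < e & forall t : R, `|t| < e -> A (x + t *: v).
Proof.
move=> Ax.
have : (fun t : R => x + t *: v) @ 0 --> x + 0 *: v.
  by apply: cvgD; [exact: cvg_cst | exact: scalel_continuous].
rewrite scale0r addr0 => /(_ _ Ax) /nbhs_normP[e /= e_gt0 lineA].
by exists e => // t te; apply: lineA; rewrite /= sub0r normrN.
Qed.

Lemma E_map_coord {R : realType} {d : nat} (k : 'I_d) {sigma : R -> R} :
  lip_incr sigma -> E_map (fun x : 'cV[R]_d => sigma (x k 0) *: delta_mx k 0).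
Proof.
move=> sigma_lip; exists 1%N, (delta_mx 0 k), (fun=> sigma); split=> //.
apply/funext => x; apply/matrixP => i j.
rewrite !mxE big_ord1 !mxE /= (bigD1 k) //= big1 => [|l lk]; last first.
  by rewrite !mxE (negbTE lk) andbF mul0r.
by rewrite !mxE /= ord1 !eqxx andbT mul1r addr0 mulrC.
Qed.

Lemma relu_map_coord_line {R : realType} {d : nat} {g : 'cV[R]_d -> 'cV[R]_d} x k :
  relu_map g -> exists p (a c : 'I_p -> R), forall s,
    g (x + s *: delta_mx k 0) k 0 = \sum_i a i * relu (c i + s * a i).
Proof.
move=> [p [W [b ->]]]; exists p, (fun i => W i k), (fun i => (W *m x - b) i 0) => s.
rewrite mulmxDr -scalemxAr -colE mxE; apply: eq_bigr => i _.
by rewrite !mxE; congr (_ * relu _); ring.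
Qed.

Theorem proposition3 (R : realType) (d : nat) (Omega : set 'cV[R]_d) :
  (0 < d)%N ->
  compact Omega ->
  Omega° !=set0 ->
  ~ (forall f : 'cV[R]_d -> 'cV[R]_d, E_map f ->
       forall eps : R, 0 < eps ->
         exists g : 'cV[R]_d -> 'cV[R]_d, relu_map g /\
           (forall x, Omega x -> enorm (f x - g x) <= eps)).
Proof.
move=> d_gt0 _ [x0 Ox0] approx.
pose k := Ordinal d_gt0.
have [e e_gt0 lineO] := nbhs_line (delta_mx k 0) Ox0.
pose t := e / 4; have t_gt0 : 0 < t by rewrite divr_gt0.
pose f (x : 'cV[R]_d) : 'cV[R]_d := ramp (x0 k 0 + t) t (x k 0) *: delta_mx k 0.
have [g [gR fg]] := approx f (E_map_coord k (ramp_lip_incr _ _)) _ (divr_gt0 t_gt0 (ltr0n _ 8)).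
have [p [a [c gline]]] := relu_map_coord_line x0 k gR.
have fg_line s : 0 <= s -> s <= 3 * t ->
    `|ramp (x0 k 0 + t) t (x0 k 0 + s) - \sum_i a i * relu (c i + s * a i)| <= t / 8.
  move=> s_ge0 s_le; rewrite -gline; apply: le_trans (fg _ (lineO s _)).
    have := coord_le_enorm (f (x0 + s *: delta_mx k 0) - g (x0 + s *: delta_mx k 0)) k.
    by rewrite !mxE !eqxx mulr1n !mulr1.
  by rewrite ger0_norm //; move: s_le; rewrite /t; lra.
have := jump_test_approx (ltW t_gt0) fg_line.
have := jump_test_ridge_sum_le0 a c t (ltW t_gt0).
rewrite jump_test_ramp //; lra.
Qed.
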